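(* Let $q$ be a prime power and $GF(q)$ the finite field with $q$ elements. For every integer $n\ge 1$, the number of $n\times n$ upper-triangular matrices $X$ with entries in $GF(q)$ satisfying $X^2=0$ equals $C_n(q)$, where for $n\ge 0$ $$C_{2n}(q)=\sum_{j\in\mathbb{Z}}\left[\binom{2n}{n-3j}-\binom{2n}{n-3j-1}\right] q^{\,n^2-3j^2-j},$$ $$C_{2n+1}(q)=\sum_{j\in\mathbb{Z}}\left[\binom{2n+1}{n-3j}-\binom{2n+1}{n-3j-1}\right] q^{\,n^2+n-3j^2-2j}.$$
   Context: Ordinary binomial coefficients $\binom{N}{k}$ are taken to be $0$ when $k<0$ or $k>N$, so each sum over $j\in\mathbb{Z}$ has finitely many nonzero terms. *)

From HB Require Import structures.
From mathcomp Require Import all_boot all_order all_algebra all_fingroup all_field.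
Set Implicit Arguments. Unset Strict Implicit. Unset Printing Implicit Defensive.
Import Order.TTheory GRing.Theory Num.Theory.
Local Open Scope ring_scope.

Definition binz (N : nat) (k : int) : int :=
  match k with Posz k' => ('C(N, k'))%:Z | Negz _ => 0 end.

Definition upper_triangular (R : nmodType) (n : nat) (X : 'M[R]_n) : bool :=
  [forall i : 'I_n, forall j : 'I_n, (j < i)%N ==> (X i j == 0)].

(* the finite sum over j in Z, restricted to j in [-m, m], which contains
   every j giving a nonzero binomial term (m = 2n or 2n+1) *)
Definition Cpoly (m : nat) (q : nat) : rat :=
  let n := m./2 in
  \sum_(i < (2 * m).+1)
    (let j : int := (i%:Z - m%:Z) in
     if ~~ odd m then
       ((binz m (n%:Z - 3 * j) - binz m (n%:Z - 3 * j - 1))%:~R : rat)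
         * (q%:R : rat) ^ ((n * n)%:Z - 3 * j * j - j)
     else
       ((binz m (n%:Z - 3 * j) - binz m (n%:Z - 3 * j - 1))%:~R : rat)
         * (q%:R : rat) ^ ((n * n + n)%:Z - 3 * j * j - 2 * j)).

(* Count by rank.  Deleting the first row and column of a square-zero upper
   triangular matrix X leaves Y of the same kind, and the admissible first rows
   w are the w with w Y = 0: those in the row space of Y keep the rank, the
   others raise it by one.  This gives a two-term recurrence for the number of
   such N x N matrices of rank r, solved by
     sum_k ballot(N, k) (-1)^i q^(k (N - k) + C(i, 2)) [N - 2k - i, i]_q,
   i = r - k, where ballot(N, k) = C(N, k) - C(N, k - 1).  Summing over r
   leaves the alternating sums s_m = sum_i (-1)^i q^C(i, 2) [m - i, i]_q,
   which satisfy s_(m+3) = - q^(m+1) s_m: they vanish for m = 2 mod 3 and are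
   signed powers of q otherwise.  Grouping the sum over k by residues mod 3 and
   reflecting ballot(N, k) = - ballot(N, N - k + 1) gives C_N(q). *)

From HB Require Import structures.
From mathcomp Require Import all_boot all_order all_algebra all_fingroup all_field.
From mathcomp Require Import zify ring.
Set Implicit Arguments. Unset Strict Implicit. Unset Printing Implicit Defensive.
Import Order.TTheory GRing.Theory Num.Theory.
Local Open Scope ring_scope.

Section RowSpaces.
Variable F : finFieldType.

Lemma card_rowspace m n (A : 'M[F]_(m, n)) :
  #|[set w : 'rV[F]_n | (w <= A)%MS]| = (#|F| ^ \rank A)%N.
Proof.
have -> : [set w : 'rV[F]_n | (w <= A)%MS] =
          [set u *m row_base A | u : 'rV[F]_(\rank A)].
  apply/setP=> w; rewrite inE -(eq_row_base A); apply/idP/imsetP.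
    by case/submxP=> u ->; exists u.
  by case=> u _ ->; apply: submxMl.
by rewrite card_imset ?card_mx ?mul1n //; apply/row_free_inj/row_base_free.
Qed.

Lemma card_left_kernel m n (Y : 'M[F]_(m, n)) :
  #|[set w : 'rV[F]_m | w *m Y == 0]| = (#|F| ^ (m - \rank Y))%N.
Proof.
rewrite -mxrank_ker -card_rowspace; apply: eq_card => w.
by rewrite !inE sub_kermx.
Qed.

Lemma mxrank_col_mx_rV m n (w : 'rV[F]_n) (Y : 'M[F]_(m, n)) :
  \rank (col_mx w Y) = (\rank Y + ~~ (w <= Y)%MS)%N.
Proof.
rewrite -addsmxE; have [wY | wNY] := boolP (w <= Y)%MS.
  by rewrite (addsmx_idPr wY) addn0.
have w_neq0 : w != 0 by apply: contraNneq wNY => ->; rewrite sub0mx.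
have [le_cap eq_cap] := mxrank_leqif_sup (capmxSl w Y).
have cap0 : \rank (w :&: Y)%MS = 0%N.
  have : \rank (w :&: Y)%MS != \rank w.
    by rewrite eq_cap; apply: contra wNY => /submx_trans; apply; apply: capmxSr.
  by move: le_cap; rewrite rank_rV w_neq0; lia.
by have := mxrank_sum_cap w Y; rewrite rank_rV w_neq0 cap0 addn0 addnC.
Qed.

End RowSpaces.

Section SquareZeroCount.
Variable F : finFieldType.
Local Notation q := (#|F|%:R : rat).

Definition sqzero_ut n := [set X : 'M[F]_n | upper_triangular X && (X *m X == 0)].

Definition sqzero_ut_rank n r := [set X in sqzero_ut n | \rank X == r].

Definition sqzero_count n r := #|sqzero_ut_rank n r|.

Definition border_rows n (Y : 'M[F]_n) r :=
  [set w : 'rV[F]_n | (w *m Y == 0) && (\rank (col_mx w Y) == r)].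

Lemma upper_triangular_block n (a : 'M[F]_1) (w : 'rV[F]_n) (c : 'cV[F]_n)
    (Y : 'M[F]_n) :
  upper_triangular (block_mx a w c Y : 'M_(1 + n)) =
  (c == 0) && upper_triangular Y.
Proof.
rewrite /upper_triangular; apply/forallP/andP => [utX | [/eqP c0 /forallP utY] i].
  split.
    apply/eqP/matrixP => i j; rewrite mxE.
    have /forallP/(_ (lshift n j))/implyP := utX (rshift 1 i).
    by rewrite block_mxEdl => lt0; apply/eqP/lt0; rewrite (ord1 j).
  apply/forallP => i; apply/forallP => j; apply/implyP => lt_ji.
  have /forallP/(_ (rshift 1 j))/implyP := utX (rshift 1 i).
  by rewrite block_mxEdr; apply; rewrite /= ltn_add2l.
apply/forallP => j; apply/implyP.
rewrite -[i](splitK i) -[j](splitK j).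
case: (split i) => i'; case: (split j) => j' /=.
- by rewrite (ord1 i') (ord1 j').
- by rewrite (ord1 i').
- by rewrite block_mxEdl c0 mxE.
- rewrite block_mxEdr ltn_add2l => lt_ji.
  by have /forallP/(_ j')/implyP := utY i'; apply.
Qed.

Lemma mx11_sqr_eq0 (a : 'M[F]_1) : (a *m a == 0) = (a == 0).
Proof.
apply/idP/idP => [|/eqP->]; last by rewrite mul0mx.
rewrite [a]mx11_scalar -scalar_mxM => /eqP/matrixP/(_ 0 0).
rewrite !mxE /= mulr1n => /eqP; rewrite mulf_eq0 orbb => /eqP a0.
by apply/eqP/matrixP => i j; rewrite !mxE a0 mul0rn.
Qed.

Lemma mxrank_border n (w : 'rV[F]_n) (Y : 'M[F]_n) :
  \rank (block_mx 0 w 0 Y : 'M_(1 + n)) = \rank (col_mx w Y).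
Proof. by rewrite block_mxEh col_mx0 rank_row_0mx. Qed.

Lemma border_sqr_eq0 n (a : 'M[F]_1) (w : 'rV[F]_n) (Y : 'M[F]_n) :
  (block_mx a w 0 Y *m block_mx a w 0 Y == 0 :> 'M_(1 + n)) =
  [&& a == 0, w *m Y == 0 & Y *m Y == 0].
Proof.
rewrite mulmx_block !mulmx0 !mul0mx !addr0 !add0r -block_mx0.
apply/eqP/and3P => [|[/eqP -> /eqP -> /eqP ->]]; last by rewrite !mul0mx add0r.
case/eq_block_mx => /eqP; rewrite mx11_sqr_eq0 => /eqP a0.
by rewrite a0 mul0mx add0r => -> _ ->.
Qed.

(* Every [X] in [sqzero_ut (1 + n)] is [block_mx 0 w 0 Y]: upper triangularity kills
   the first column, and [X^2 = 0] kills the corner and forces [w Y = 0]. *)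
Lemma sqzero_countS n r :
  sqzero_count (1 + n) r = (\sum_(Y in sqzero_ut n) #|border_rows Y r|)%N.
Proof.
rewrite /sqzero_count.
pose border (p : 'M[F]_n * 'rV[F]_n) : 'M[F]_(1 + n) := block_mx 0 p.2 0 p.1.
pose P := [set p | (p.1 \in sqzero_ut n) && (p.2 \in border_rows p.1 r)].
have -> : sqzero_ut_rank (1 + n) r = border @: P.
  apply/setP => X; rewrite !inE; apply/idP/imsetP.
    rewrite -(submxK X) upper_triangular_block => /andP[/andP[/andP[/eqP c0 utY]]].
    rewrite c0 border_sqr_eq0 => /and3P[/eqP a0 wY YY] rk.
    exists (drsubmx X, ursubmx X); last by rewrite /border /= a0.
    by rewrite !inE /= utY YY wY -mxrank_border -a0.
  case=> p; rewrite !inE => /andP[/andP[utY YY] /andP[wY rk]] ->.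
  by rewrite upper_triangular_block eqxx utY border_sqr_eq0 eqxx YY wY mxrank_border.
rewrite card_imset; last first.
  by move=> [Y1 w1] [Y2 w2] /eq_block_mx[_ /= -> _ ->].
rewrite -sum1_card (eq_bigl (fun p =>
  (p.1 \in sqzero_ut n) && (p.2 \in border_rows p.1 r))); last by move=> p; rewrite inE.
rewrite -(pair_big_dep (fun Y => Y \in sqzero_ut n) (fun Y w => w \in border_rows Y r)
  (fun _ _ => 1%N)) /=.
by apply: eq_bigr => Y _; rewrite sum1_card.
Qed.

(* Since [Y^2 = 0] the row space of [Y] lies in its left kernel; a row [w] of
   that kernel raises the rank exactly when it leaves the row space. *)
Lemma card_border_rows n (Y : 'M[F]_n) r : Y *m Y = 0 ->
  (#|border_rows Y r|%:R : rat) =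
  (if r == \rank Y then q ^+ \rank Y else 0) +
  (if r == (\rank Y).+1 then q ^+ (n - \rank Y) - q ^+ \rank Y
   else 0).
Proof.
move=> YY; set Im := [set w : 'rV[F]_n | (w <= Y)%MS].
set Ker := [set w : 'rV[F]_n | w *m Y == 0].
have sub_ImKer : Im \subset Ker.
  apply/subsetP => w; rewrite !inE -sub_kermx => /submx_trans; apply.
  by rewrite sub_kermx YY.
have -> : border_rows Y r =
    [set w in Ker | (\rank Y + ~~ (w <= Y)%MS)%N == r].
  by apply/setP => w; rewrite !inE mxrank_col_mx_rV.
have [-> | r_neq] := eqVneq r (\rank Y).
  have -> : [set w in Ker | (\rank Y + ~~ (w <= Y)%MS)%N == \rank Y] = Im.
    apply/setP => w; have := subsetP sub_ImKer w; rewrite !inE.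
    case: (w <= Y)%MS => [-> // | _]; first by rewrite addn0 eqxx.
    by rewrite addn1 (gtn_eqF (ltnSn _)) andbF.
  by rewrite card_rowspace natrX (ltn_eqF (ltnSn _)) addr0.
rewrite add0r; have [-> | r_neq'] := eqVneq r (\rank Y).+1.
  have -> : [set w in Ker | (\rank Y + ~~ (w <= Y)%MS)%N == (\rank Y).+1] =
      Ker :\: Im.
    apply/setP => w; rewrite !inE.
    by case: (w <= Y)%MS; rewrite ?addn0 ?addn1 ?eqxx ?(ltn_eqF (ltnSn _)) ?andbF ?andbT.
  rewrite cardsD (setIidPr sub_ImKer) natrB ?subset_leq_card //.
  by rewrite card_left_kernel card_rowspace !natrX.
rewrite (_ : [set w in Ker | _] = set0) ?cards0 //; apply/setP => w.
rewrite !inE; case: (w <= Y)%MS; rewrite ?addn0 ?addn1.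
  by rewrite [_ == r]eq_sym (negbTE r_neq) andbF.
by rewrite [_ == r]eq_sym (negbTE r_neq') andbF.
Qed.

Lemma sum_rank_indicator n (a : rat) r :
  \sum_(Y in sqzero_ut n) (if r == \rank Y then a else 0) =
  a * (sqzero_count n r)%:R.
Proof.
rewrite (bigID (fun Y => r == \rank Y)) /= [X in _ + X]big1 ?addr0; last first.
  by move=> Y /andP[_ /negbTE ->].
rewrite (eq_bigr (fun _ => a)) => [|Y /andP[_ ->] //].
rewrite sumr_const mulr_natr; congr (_ *+ _); apply: eq_card => Y.
by rewrite unfold_in !inE [r == _]eq_sym.
Qed.

Lemma sqzero_count_rec n r :
  ((sqzero_count (1 + n) r)%:R : rat) =
  q ^+ r * (sqzero_count n r)%:R +
  (if r is r'.+1 then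
     (q ^+ (n - r') - q ^+ r') * (sqzero_count n r')%:R
   else 0).
Proof.
rewrite sqzero_countS natr_sum.
rewrite (eq_bigr (fun Y =>
    (if r == \rank Y then q ^+ r else 0) +
    (if r == (\rank Y).+1 then q ^+ (n - r.-1) - q ^+ r.-1 else 0))); last first.
  move=> Y; rewrite inE => /andP[_ /eqP YY]; rewrite card_border_rows //.
  have [-> | _] := eqVneq r (\rank Y); first by rewrite (ltn_eqF (ltnSn _)).
  by case: eqP => [-> |].
rewrite big_split /= sum_rank_indicator.
case: r => [|r]; first by rewrite big1.
congr (_ + _); rewrite -sum_rank_indicator; apply: eq_bigr => Y _.
by rewrite eqSS; case: eqP => [->|].
Qed.

Lemma sqzero_count0 r : sqzero_count 0 r = (r == 0%N).
Proof.
rewrite /sqzero_count; case: r => [|r].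
  rewrite (_ : sqzero_ut_rank 0 0 = setT) ?cardsT ?card_mx //.
  apply/setP => X; rewrite !inE (flatmx0 X) mxrank0 mulmx0 eqxx !andbT.
  by apply/forallP => -[].
rewrite (_ : sqzero_ut_rank 0 r.+1 = set0) ?cards0 //.
by apply/setP => X; rewrite !inE (flatmx0 X) mxrank0 andbF.
Qed.

Lemma card_sqzero_ut n :
  (#|sqzero_ut n|%:R : rat) = \sum_(r < n.+1) (sqzero_count n r)%:R.
Proof.
under eq_bigr => r _ do rewrite -[_%:R]mul1r -sum_rank_indicator.
rewrite exchange_big /= -sum1_card natr_sum; apply: eq_bigr => X _.
have rkX : (\rank X < n.+1)%N by rewrite ltnS rank_leq_row.
rewrite (bigD1 (Ordinal rkX)) //= eqxx big1 ?addr0 // => r.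
by rewrite -val_eqE /= => /negbTE ->.
Qed.

End SquareZeroCount.

Lemma sum_nat_extend (R : nmodType) (f : nat -> R) n m : (n <= m)%N ->
  (forall i, (n <= i < m)%N -> f i = 0) ->
  \sum_(0 <= i < n) f i = \sum_(0 <= i < m) f i.
Proof.
move=> le_nm f0; rewrite [RHS](big_cat_nat _ (n := n)) //=.
rewrite [X in _ = _ + X](_ : _ = 0) ?addr0 //.
by rewrite big_nat_cond big1 // => i /andP[/f0].
Qed.

Lemma sum_nat_triangle (R : nmodType) M (f : nat -> nat -> R) :
  \sum_(0 <= r < M) \sum_(0 <= k < r.+1) f k (r - k)%N =
  \sum_(0 <= k < M) \sum_(0 <= i < M - k) f k i.
Proof.
elim: M => [|M IH]; first by rewrite !big_geq.
rewrite big_nat_recr //= IH [RHS]big_nat_recr //= subSnn big_nat1.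
rewrite (@eq_big_nat _ _ _ 0 M (fun k => \sum_(0 <= i < M.+1 - k) f k i)
   (fun k => \sum_(0 <= i < M - k) f k i + f k (M - k)%N)); last first.
  by move=> k /andP[_ kM]; rewrite subSn ?big_nat_recr //; lia.
by rewrite big_split /= -addrA big_nat_recr //= subnn.
Qed.

Section QBinomial.
Variables (R : comPzRingType) (q : R).

Fixpoint qbinom (n k : nat) : R :=
  match n, k with
  | _, 0 => 1
  | 0, _.+1 => 0
  | n'.+1, k'.+1 => qbinom n' k' + q ^+ k'.+1 * qbinom n' k'.+1
  end.

Lemma qbinomn0 n : qbinom n 0 = 1. Proof. by case: n. Qed.

Lemma qbinomSS n k : qbinom n.+1 k.+1 = qbinom n k + q ^+ k.+1 * qbinom n k.+1.
Proof. by []. Qed.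

Lemma qbinom_small n k : (n < k)%N -> qbinom n k = 0.
Proof.
elim: n k => [|n IH] [|k] //= lt_nk.
by rewrite !IH ?mulr0 ?addr0 //; lia.
Qed.

Lemma qbinom_ratio n j :
  (q ^+ j.+1 - 1) * qbinom n j.+1 = (q ^+ (n - j) - 1) * qbinom n j.
Proof.
elim: n j => [|n IH] j.
  by case: j => [|j] /=; rewrite ?subn0 ?expr0 ?subrr ?mulr0 ?mul0r.
case: j => [|j].
  have := IH 0%N; rewrite qbinomSS !qbinomn0 !subn0 !mulr1 => IH0.
  by rewrite mulrDr mulr1 mulrCA IH0 !exprS; ring.
have [lt_jn | le_nj] := ltnP j n; last first.
  rewrite !qbinomSS (@qbinom_small n j.+1) ?(@qbinom_small n j.+2) ?mulr0 ?addr0; try lia.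
  by rewrite (_ : n.+1 - j.+1 = 0)%N ?expr0 ?subrr ?mul0r ?mulr0 //; lia.
have e1 : (n.+1 - j.+1 = n - j)%N by lia.
have e2 : (n - j = (n - j.+1).+1)%N by lia.
have := IH j; have := IH j.+1; rewrite !qbinomSS e1 e2 => H2 H1.
by rewrite mulrDr mulrCA H2 mulrDr [X in _ = _ + X]mulrCA -H1 !exprS; ring.
Qed.

Lemma qbinomS_absorb n j :
  (q ^+ n.+1 - q ^+ j) * qbinom n.+1 j = q ^+ j * (q ^+ n.+1 - 1) * qbinom n j.
Proof.
case: j => [|j]; first by rewrite !qbinomn0 expr0 !mul1r mulr1.
have [le_jn | lt_nj] := leqP j n; last first.
  rewrite qbinomSS (@qbinom_small n j) ?(@qbinom_small n j.+1) //; try lia.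
  by rewrite !mulr0 addr0 mulr0.
have := qbinom_ratio n j; rewrite qbinomSS.
have -> : n = (j + (n - j))%N by lia.
move: (n - j)%N => d; rewrite addKn => ratio; apply/eqP; rewrite -subr_eq0.
have -> : forall a b : R,
    (q ^+ (j + d).+1 - q ^+ j.+1) * (a + q ^+ j.+1 * b) -
    q ^+ j.+1 * (q ^+ (j + d).+1 - 1) * b =
    q ^+ j.+1 * ((q ^+ d - 1) * a - (q ^+ j.+1 - 1) * b).
  by move=> a b; rewrite !exprS !exprD; ring.
by rewrite ratio subrr mulr0.
Qed.

Lemma qbinomSSr n k : qbinom n.+1 k.+1 = q ^+ (n - k) * qbinom n k + qbinom n k.+1.
Proof.
elim: n k => [|n IH] k.
  by case: k => [|k] //=; rewrite !mulr0 ?addr0 ?mulr1 ?expr0.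
case: k => [|k].
  rewrite {1}qbinomSS qbinomn0 [in X in X = _](IH 0%N).
  rewrite [in X in _ = X](qbinomSS n 0) !qbinomn0 !subn0.
  by rewrite !exprS; ring.
rewrite qbinomSS [in X in X = _](IH k) [in X in X = _](IH k.+1).
rewrite [in X in _ = X](qbinomSS n k) [in X in _ = X](qbinomSS n k.+1).
have [lt_kn | le_nk] := ltnP k n; last first.
  rewrite (@qbinom_small n k.+1) ?(@qbinom_small n k.+2) ?mulr0 ?addr0 //; try lia.
  by rewrite (_ : n.+1 - k.+1 = n - k)%N ?mulr0 ?addr0.
have -> : (n.+1 - k.+1 = (n - k.+1).+1)%N by lia.
have -> : (n - k = (n - k.+1).+1)%N by lia.
by rewrite !exprS; ring.
Qed.

End QBinomial.

Definition ballot (N k : nat) : int :=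
  'C(N, k)%:Z - (if k is k'.+1 then 'C(N, k')%:Z else 0).

Lemma ballotSS N k : ballot N.+1 k.+1 = ballot N k.+1 + ballot N k.
Proof. by case: k => [|k]; rewrite /ballot !binS ?bin0; lia. Qed.

Lemma ballot_rev N k : (k <= N)%N -> ballot N (N - k).+1 = - ballot N k.
Proof.
move=> le_kN; rewrite /ballot bin_sub //.
case: k le_kN => [|k] le_kN; first by rewrite subn0 bin_small //; lia.
rewrite (_ : (N - k.+1).+1 = N - k)%N; last by lia.
by rewrite bin_sub 1?ltnW //; lia.
Qed.

Lemma ballot_center k : ballot (2 * k).+1 k.+1 = 0.
Proof.
by rewrite /ballot [in 'C(_, k.+1)](_ : k.+1 = (2 * k).+1 - k)%N ?bin_sub ?subrr //; lia.
Qed.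

Section RankCoef.
Variable R : pzRingType.

Definition rank_coef N k : R := if (2 * k <= N)%N then (ballot N k)%:~R else 0.

Lemma rank_coefn0 N : rank_coef N 0 = 1 :> R.
Proof. by rewrite /rank_coef muln0 /ballot bin0 subr0. Qed.

Lemma rank_coefSS N k : (2 * k.+1 <= N.+1)%N ->
  rank_coef N.+1 k.+1 = rank_coef N k.+1 + rank_coef N k.
Proof.
move=> le_kN; rewrite /rank_coef le_kN ballotSS intrD (_ : 2 * k <= N)%N; last by lia.
have [// | lt_Nk] := leqP (2 * k.+1) N.
rewrite (_ : N = (2 * k).+1); last by lia.
by rewrite ballot_center add0r.
Qed.

End RankCoef.

Arguments rank_coef {R} N k.

Section RankPolynomial.
Variables (R : comPzRingType) (q : R).
Local Notation qbinom := (qbinom q).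

Definition rank_term N k i : R :=
  (-1) ^+ i * q ^+ (k * (N - k) + 'C(i, 2)) * qbinom (N - k - (k + i)) i.

Lemma rank_termn0 N k : rank_term N k 0 = q ^+ (k * (N - k)).
Proof.
by rewrite /rank_term addn0 qbinomn0 mulr1 expr0 mul1r (_ : 'C(0, 2) = 0%N) ?addn0.
Qed.

Lemma rank_term_rec k j n (N := (2 * k + j + n).+1) :
  rank_term N.+1 k j.+1 + rank_term N.+1 k.+1 j =
  q ^+ (k + j).+1 * rank_term N k j.+1 +
  (q ^+ (N - (k + j)) - q ^+ (k + j)) * rank_term N k j.
Proof.
rewrite /rank_term.
have -> : (N.+1 - k - (k + j.+1) = n.+1)%N by rewrite /N; lia.
have -> : (N.+1 - k.+1 - (k.+1 + j) = n)%N by rewrite /N; lia.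
have -> : (N - k - (k + j.+1) = n)%N by rewrite /N; lia.
have -> : (N - k - (k + j) = n.+1)%N by rewrite /N; lia.
have -> : (N - (k + j) = k + n.+1)%N by rewrite /N; lia.
have -> : (N.+1 - k = (k + j + n.+1).+1)%N by rewrite /N; lia.
have -> : (N.+1 - k.+1 = k + j + n.+1)%N by rewrite /N; lia.
have -> : (N - k = k + j + n.+1)%N by rewrite /N; lia.
have absorb := qbinomS_absorb q n j; rewrite !exprS in absorb.
rewrite qbinomSS mulnS mulSn binS bin1 !exprD !exprS exprD.
(* The difference of the two sides is a multiple of [qbinomS_absorb n j]. *)
apply/eqP; rewrite -subr_eq0; apply/eqP.
set s := (-1) ^+ j * q ^+ k * q ^+ (k * (k + j + n.+1)) * q ^+ 'C(j, 2).
rewrite -[RHS](mulr0 (- s)) -(subrr (q ^+ j * (q * q ^+ n - 1) * qbinom n j)).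
by rewrite -[X in _ * (X - _)]absorb /s; ring.
Qed.

Definition rank_poly N r : R :=
  \sum_(0 <= k < r.+1) rank_coef N k * rank_term N k (r - k).

Lemma sum_rank_coefS N m (f : nat -> R) : (2 * m <= N.+1)%N ->
  \sum_(0 <= k < m.+1) rank_coef N.+1 k * f k =
  \sum_(0 <= k < m.+1) rank_coef N k * f k +
  \sum_(0 <= k < m) rank_coef N k * f k.+1.
Proof.
move=> le_mN; rewrite !big_nat_recl // !rank_coefn0 -addrA -big_split /=.
congr (_ + _); apply: eq_big_nat => k /andP[_ lt_km].
by rewrite rank_coefSS ?mulrDl //; lia.
Qed.

Lemma rank_poly_rec N r : (2 * r.+1 <= N.+1)%N ->
  rank_poly N.+1 r.+1 =
  q ^+ r.+1 * rank_poly N r.+1 + (q ^+ (N - r) - q ^+ r) * rank_poly N r.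
Proof.
move=> le_rN; rewrite /rank_poly.
rewrite (sum_rank_coefS (fun k => rank_term N.+1 k (r.+1 - k))) //.
rewrite big_nat_recr //= [X in _ = q ^+ r.+1 * X + _]big_nat_recr //=.
rewrite subnn !rank_termn0 mulrDr !mulr_sumr.
have -> : (N.+1 - r.+1 = N - r)%N by lia.
have -> : q ^+ (r.+1 * (N - r)) = q ^+ r.+1 * q ^+ (r.+1 * (N - r.+1)).
  by rewrite (_ : N - r = (N - r.+1).+1)%N ?mulnS ?exprD //; lia.
rewrite addrAC [RHS]addrAC -!big_split /=; congr (_ + _); last by ring.
apply: eq_big_nat => k /andP[_ le_kr]; rewrite subSS.
have := rank_term_rec k (r - k) (N - k - r.+1).
rewrite (_ : (2 * k + (r - k) + (N - k - r.+1)).+1 = N); last by lia.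
rewrite (_ : (r.+1 - k = (r - k).+1)%N); last by lia.
rewrite (_ : (k + (r - k) = r)%N); last by lia.
by move=> rec; rewrite -!mulrDr rec; ring.
Qed.

Lemma rank_poly_small N r : (N < 2 * r)%N -> rank_poly N r = 0.
Proof.
move=> lt_Nr; rewrite /rank_poly big_nat_cond big1 // => k /andP[/andP[_ lt_kr] _].
rewrite /rank_coef; case: ifP => le_kN; last by rewrite mul0r.
by rewrite /rank_term qbinom_small ?mulr0 //; lia.
Qed.

Lemma rank_polyn0 N : rank_poly N 0 = 1.
Proof. by rewrite /rank_poly big_nat1 rank_coefn0 rank_termn0 mul0n expr0 mulr1. Qed.

End RankPolynomial.

Section AlternatingSum.
Variables (R : comPzRingType) (q : R).
Local Notation qbinom := (qbinom q).

Definition alt_qsum m : R :=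
  \sum_(0 <= i < m.+1) (-1) ^+ i * q ^+ 'C(i, 2) * qbinom (m - i) i.

Definition alt_qsum_shift m : R :=
  \sum_(0 <= i < m.+1) (-1) ^+ i * q ^+ ('C(i, 2) + (m - i)) * qbinom (m - i) i.

Lemma alt_qsumSS m : alt_qsum m.+2 = alt_qsum m.+1 - alt_qsum_shift m.
Proof.
rewrite /alt_qsum /alt_qsum_shift big_nat_recl // [X in _ = X - _]big_nat_recl //.
rewrite [X in _ = _ + X - _](@sum_nat_extend _ _ m.+1 m.+2) //; last first.
  by move=> i /andP[? ?]; rewrite qbinom_small ?mulr0 //; lia.
rewrite [X in _ = _ - X](@sum_nat_extend _ _ m.+1 m.+2) //; last first.
  by move=> i /andP[? ?]; rewrite qbinom_small ?mulr0 //; lia.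
rewrite !subn0 !qbinomn0 -addrA -sumrB; congr (_ + _).
apply: eq_big_nat => i /andP[_ lt_im]; rewrite subSS.
have [le_im | lt_mi] := leqP i m; last first.
  have -> : (m.+1 - i = 0)%N by lia.
  have -> : (m - i = 0)%N by lia.
  case: i lt_im lt_mi => // i lt_im lt_mi.
  by rewrite !qbinom_small ?mulr0 ?subr0 //; lia.
rewrite (_ : m.+1 - i = (m - i).+1)%N; last by lia.
rewrite qbinomSSr mulrDr addrC binS bin1; congr (_ + _).
have [le_2im | lt_m2i] := leqP (2 * i) m; last first.
  by rewrite (@qbinom_small _ q (m - i)) ?mulr0 ?oppr0 //; lia.
rewrite !exprD (_ : q ^+ (m - i) = q ^+ i * q ^+ (m - i - i)); last first.
  by rewrite -exprD; congr (_ ^+ _); lia.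
by rewrite !exprS; ring.
Qed.

Lemma alt_qsum_shiftSS m :
  alt_qsum_shift m.+2 = q ^+ m.+2 * alt_qsum m.+1 - q ^+ m.+1 * alt_qsum m.
Proof.
rewrite /alt_qsum /alt_qsum_shift big_nat_recl // [X in _ = _ * X - _]big_nat_recl //.
rewrite [X in _ = _ * (_ + X) - _](@sum_nat_extend _ _ m.+1 m.+2) //; last first.
  by move=> i /andP[? ?]; rewrite qbinom_small ?mulr0 //; lia.
rewrite [X in _ = _ - _ * X](@sum_nat_extend _ _ m.+1 m.+2) //; last first.
  by move=> i /andP[? ?]; rewrite qbinom_small ?mulr0 //; lia.
rewrite !subn0 !qbinomn0 mulrDr -addrA !expr0 !mul1r bin0n add0n mulr1.
congr (_ + _); rewrite !mulr_sumr -sumrB; apply: eq_big_nat => i /andP[_ lt_im].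
have [le_im | lt_mi] := leqP i m; last first.
  have -> : (m.+2 - i.+1 = 0)%N by lia.
  have -> : (m.+1 - i.+1 = 0)%N by lia.
  have -> : (m - i = 0)%N by lia.
  case: i lt_im lt_mi => // i lt_im lt_mi.
  by rewrite !qbinom_small ?mulr0 ?subr0 //; lia.
have [d ->] : exists d, m = (i + d)%N by exists (m - i)%N; lia.
have -> : ((i + d).+2 - i.+1 = d.+1)%N by lia.
have -> : ((i + d).+1 - i.+1 = d)%N by lia.
by rewrite addKn qbinomSS binS bin1 !exprS !exprD !exprS; ring.
Qed.

Lemma alt_qsum_rec3 m : alt_qsum m.+3 = - q ^+ m.+1 * alt_qsum m.
Proof.
elim: m => [|m IH].
  rewrite /alt_qsum !big_nat_recl //= big_geq // (_ : 'C(3, 2) = 3%N) //.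
  by rewrite !expr0 big_geq // expr1 expr2 mulN1r; ring.
have := alt_qsumSS m.+2; rewrite alt_qsum_shiftSS alt_qsumSS IH => ->.
by rewrite !exprS; ring.
Qed.

Lemma alt_qsum_mod3 u :
  [/\ alt_qsum (3 * u) = (-1) ^+ u * q ^+ (3 * 'C(u, 2) + u),
      alt_qsum (3 * u).+1 = (-1) ^+ u * q ^+ (3 * 'C(u, 2) + 2 * u)
    & alt_qsum (3 * u).+2 = 0].
Proof.
elim: u => [|u [IH0 IH1 IH2]].
  rewrite /alt_qsum !big_nat_recl //= !big_geq //= !expr0.
  by split; rewrite ?expr1 ?mulr0 ?addr0 ?mulr1 ?mul1r ?subrr.
rewrite (_ : 3 * u.+1 = (3 * u).+3)%N; last by lia.
rewrite !alt_qsum_rec3 IH0 IH1 IH2 mulr0 binS bin1; split => //.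
  rewrite (_ : 3 * ('C(u, 2) + u) + u.+1 = (3 * u).+1 + (3 * 'C(u, 2) + u))%N;
    last by lia.
  by rewrite [in RHS]exprD [in RHS]exprS; ring.
rewrite (_ : 3 * ('C(u, 2) + u) + 2 * u.+1 = (3 * u).+2 + (3 * 'C(u, 2) + 2 * u))%N;
  last by lia.
by rewrite [in RHS]exprD !exprS; ring.
Qed.

End AlternatingSum.

Section RankTotal.
Variables (R : comPzRingType) (q : R).

Definition rank_total N : R :=
  \sum_(0 <= k < N.+1) rank_coef N k * (q ^+ (k * (N - k)) * alt_qsum q (N - 2 * k)).

Lemma sum_rank_poly N : \sum_(0 <= r < N.+1) rank_poly q N r = rank_total N.
Proof.
rewrite /rank_poly (sum_nat_triangle N.+1 (fun k i => rank_coef N k * rank_term q N k i)).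
apply: eq_big_nat => k /andP[_ le_kN].
rewrite /alt_qsum !mulr_sumr [RHS](@sum_nat_extend _ _ _ (N.+1 - k)); last 2 first.
- by lia.
- by move=> i /andP[? ?]; rewrite qbinom_small ?mulr0 //; lia.
apply: eq_big_nat => i /andP[_ lt_iN].
rewrite /rank_term subnDA (_ : N - k - k = N - 2 * k)%N; last by lia.
by rewrite exprD; ring.
Qed.

End RankTotal.

Lemma sqzero_count_rank_poly (F : finFieldType) N r :
  ((sqzero_count F N r)%:R : rat) = rank_poly (#|F|%:R : rat) N r.
Proof.
elim: N r => [|N IH] r.
  rewrite sqzero_count0; case: r => [|r]; first by rewrite rank_polyn0.
  by rewrite rank_poly_small.
have := sqzero_count_rec F N r; rewrite add1n => ->.
case: r => [|r]; first by rewrite IH !rank_polyn0 expr0 mul1r addr0.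
rewrite !IH; have [le_rN | lt_Nr] := leqP (2 * r.+1) N.+1.
  by rewrite rank_poly_rec.
rewrite !(@rank_poly_small _ _ _ r.+1) ?mulr0 ?add0r //; try lia.
have [lt_N2r | le_2rN] := ltnP N (2 * r); first by rewrite rank_poly_small ?mulr0.
by rewrite (_ : N - r = r)%N ?subrr ?mul0r //; lia.
Qed.

Definition ballotz N (K : int) : int := binz N K - binz N (K - 1).

Lemma ballotz_nat N (k : nat) : ballotz N k = ballot N k.
Proof. by case: k => [|k] //; rewrite /ballotz (_ : Posz k.+1 - 1 = k) //; lia. Qed.

Lemma ballotz_neg N K : K < 0 -> ballotz N K = 0.
Proof. by case: K. Qed.

Lemma ballot_large N k : (N.+1 < k)%N -> ballot N k = 0.
Proof. by case: k => [|k] // lt_Nk; rewrite /ballot !bin_small ?subrr //; lia. Qed.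

Lemma mul_bin2_2 m : ('C(m, 2) * 2 = m * m.-1)%N.
Proof. by elim: m => [|[|m] IH] //; rewrite binS bin1 mulnDl IH /=; lia. Qed.

Lemma sum_nat_mod3 (R : nmodType) (f : nat -> R) J :
  \sum_(0 <= t < 3 * J) f t =
  \sum_(0 <= j < J) (f (3 * j)%N + f (3 * j).+1 + f (3 * j).+2).
Proof.
elim: J => [|J IH]; first by rewrite !big_geq.
by rewrite (_ : 3 * J.+1 = (3 * J).+3)%N ?mulnS // !big_nat_recr //= IH !addrA.
Qed.

Section CpolyMatch.
Variable Q : nat.
Local Notation q := (Q%:R : rat).

Definition cpoly_term N (J : int) : rat :=
  let n := N./2 in
  if ~~ odd N then
    ((binz N (n%:Z - 3 * J) - binz N (n%:Z - 3 * J - 1))%:~R : rat)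
      * q ^ ((n * n)%:Z - 3 * J * J - J)
  else
    ((binz N (n%:Z - 3 * J) - binz N (n%:Z - 3 * J - 1))%:~R : rat)
      * q ^ ((n * n + n)%:Z - 3 * J * J - 2 * J).

Lemma cpoly_term_large N : cpoly_term N (Negz N) = 0.
Proof.
rewrite /cpoly_term (_ : (N./2)%:Z - 3 * Negz N = Posz (N./2 + 3 * N + 3)); last first.
  by rewrite NegzE; lia.
rewrite (_ : Posz (N./2 + 3 * N + 3) - 1 = Posz (N./2 + 3 * N + 2)); last by lia.
by rewrite /= !bin_small ?subrr ?mul0r ?if_same //; lia.
Qed.

Lemma Cpoly_split N :
  Cpoly N Q = \sum_(0 <= j < N.+1) (cpoly_term N j + cpoly_term N (Negz j)).
Proof.
have -> : Cpoly N Q = \sum_(i < (2 * N).+1) cpoly_term N (i%:Z - N%:Z) by [].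
rewrite -(big_mkord xpredT (fun i => cpoly_term N (i%:Z - N%:Z))).
rewrite (big_cat_nat _ (n := N)) //=; last by lia.
rewrite (big_addn 0 _ N) (_ : (2 * N).+1 - N = N.+1)%N; last by lia.
rewrite big_nat_rev /= big_split /= addrC; congr (_ + _).
  by apply: eq_big_nat => i _; rewrite PoszD addrK.
rewrite -(@sum_nat_extend _ (fun j => cpoly_term N (Negz j)) N N.+1) //; last first.
  by move=> i /andP[le_Ni lt_iN]; rewrite (_ : i = N) ?cpoly_term_large //; lia.
apply: eq_big_nat => i /andP[_ lt_iN]; congr (cpoly_term N _).
by rewrite add0n NegzE; lia.
Qed.

(* The summand of [rank_total] at [k = N./2 - t]; for [t > N./2] the
   coefficient vanishes and the truncated [N./2 - t] is harmless. *)
Definition total_term N t : rat :=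
  let k := (N./2 - t)%N in
  (ballotz N (N./2%:Z - t%:Z))%:~R * (q ^+ (k * (N - k)) * alt_qsum q (N - 2 * k)).

Lemma total_term_large N t : (N./2 < t)%N -> total_term N t = 0.
Proof. by move=> lt_nt; rewrite /total_term ballotz_neg ?mul0r //; lia. Qed.

Lemma total_term_nat N t : (t <= N./2)%N ->
  total_term N t = (ballot N (N./2 - t))%:~R *
    (q ^+ ((N./2 - t) * (N - (N./2 - t))) * alt_qsum q (N - 2 * (N./2 - t))).
Proof. by move=> le_tn; rewrite /total_term subzn // ballotz_nat. Qed.

Lemma rank_total_split N : rank_total q N = \sum_(0 <= t < 3 * N.+1) total_term N t.
Proof.
rewrite /rank_total -(@sum_nat_extend _ _ (N./2).+1 N.+1); last 2 first.
- by have := odd_double_half N; lia.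
- by move=> k /andP[lt_nk _]; rewrite /rank_coef ifN ?mul0r //; lia.
rewrite -(@sum_nat_extend _ (total_term N) (N./2).+1); last 2 first.
- by have := odd_double_half N; lia.
- by move=> t /andP[lt_nt _]; rewrite total_term_large.
rewrite big_nat_rev; apply: eq_big_nat => t /andP[_ lt_tn].
rewrite add0n subSS total_term_nat /rank_coef ?ifT //; lia.
Qed.

Lemma exprD_exprz (a b : nat) (e : int) : (a + b)%:Z = e -> q ^+ a * q ^+ b = q ^ e.
Proof. by move=> <-; rewrite -exprD exprnP. Qed.

Lemma total_term_pos N j : total_term N (3 * j) = cpoly_term N j.
Proof.
have eN := odd_double_half N; rewrite -mul2n in eN.
rewrite /cpoly_term -/(ballotz N (N./2%:Z - 3 * j%:Z)).
have [le_tn | lt_nt] := leqP (3 * j) N./2; last first.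
  by rewrite total_term_large // ballotz_neg ?mul0r ?if_same //; lia.
rewrite total_term_nat // (_ : N./2%:Z - 3 * j%:Z = Posz (N./2 - 3 * j)); last by lia.
rewrite ballotz_nat.
have := mul_bin2_2 (2 * j); case: (odd N) eN => /= eN bin2j; congr (_ * _).
  rewrite (_ : N - 2 * (N./2 - 3 * j) = (3 * (2 * j)).+1)%N; last by lia.
  have [_ -> _] := alt_qsum_mod3 q (2 * j).
  by rewrite -signr_odd oddM andFb expr0 mul1r; apply: exprD_exprz; nia.
rewrite (_ : N - 2 * (N./2 - 3 * j) = 3 * (2 * j))%N; last by lia.
have [-> _ _] := alt_qsum_mod3 q (2 * j).
by rewrite -signr_odd oddM andFb expr0 mul1r; apply: exprD_exprz; nia.
Qed.

(* The reflection [ballot N (N - k).+1 = - ballot N k] turns the terms with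
   negative index [J] into terms of [rank_total]. *)
Lemma total_term_neg N j : total_term N ((3 * j).+2 - odd N) = cpoly_term N (Negz j).
Proof.
have eN := odd_double_half N; rewrite -mul2n in eN.
rewrite /cpoly_term -/(ballotz N (N./2%:Z - 3 * Negz j)).
rewrite (_ : N./2%:Z - 3 * Negz j = Posz (N./2 + 3 * j + 3)); last by rewrite NegzE; lia.
rewrite ballotz_nat.
have [le_tn | lt_nt] := leqP ((3 * j).+2 - odd N) N./2; last first.
  by rewrite total_term_large // ballot_large ?mul0r ?if_same //; lia.
rewrite total_term_nat //.
rewrite (_ : N./2 + 3 * j + 3 = (N - (N./2 - ((3 * j).+2 - odd N))).+1)%N; last by lia.
rewrite ballot_rev; last by lia.
have := mul_bin2_2 (2 * j).+1; case: (odd N) eN le_tn => /= eN le_tn bin2j.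
  rewrite (_ : N - 2 * (N./2 - ((3 * j).+2 - 1)) = 3 * (2 * j).+1)%N; last by lia.
  have [-> _ _] := alt_qsum_mod3 q (2 * j).+1.
  rewrite exprS -signr_odd oddM andFb expr0 mulr1 intrN mulN1r !mulrN mulNr.
  by congr (- (_ * _)); apply: exprD_exprz; rewrite NegzE; nia.
rewrite (_ : N - 2 * (N./2 - ((3 * j).+2 - 0)) = (3 * (2 * j).+1).+1)%N; last by lia.
have [_ -> _] := alt_qsum_mod3 q (2 * j).+1.
rewrite exprS -signr_odd oddM andFb expr0 mulr1 intrN mulN1r !mulrN mulNr.
by congr (- (_ * _)); apply: exprD_exprz; rewrite NegzE; nia.
Qed.

Lemma total_term_zero N j : total_term N ((3 * j).+1 + odd N) = 0.
Proof.
have eN := odd_double_half N; rewrite -mul2n in eN.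
have [le_tn | lt_nt] := leqP ((3 * j).+1 + odd N) N./2; last by rewrite total_term_large.
rewrite total_term_nat //; case: (odd N) eN le_tn => /= eN le_tn.
  rewrite (_ : N - 2 * (N./2 - ((3 * j).+1 + 1)) = (3 * (2 * j).+1).+2)%N; last by lia.
  by have [_ _ ->] := alt_qsum_mod3 q (2 * j).+1; rewrite !mulr0.
rewrite (_ : N - 2 * (N./2 - ((3 * j).+1 + 0)) = (3 * (2 * j)).+2)%N; last by lia.
by have [_ _ ->] := alt_qsum_mod3 q (2 * j); rewrite !mulr0.
Qed.

Lemma rank_total_Cpoly N : rank_total q N = Cpoly N Q.
Proof.
rewrite rank_total_split Cpoly_split sum_nat_mod3; apply: eq_big_nat => j _.
have := total_term_neg N j; have := total_term_zero N j.
rewrite -total_term_pos.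
by case: (odd N); rewrite /= ?addn1 ?subn1 ?addn0 ?subn0 /= => -> ->; rewrite addr0.
Qed.

End CpolyMatch.

Unset Implicit Arguments.

Theorem mainTheorem1 (F : finFieldType) (n : nat) (hn : (0 < n)%N) :
  (#|[set X : 'M[F]_n | upper_triangular X && (X *m X == 0)]|%:R : rat)
  = Cpoly n #|F|.
Proof.
rewrite -/(sqzero_ut F n) card_sqzero_ut -rank_total_Cpoly -sum_rank_poly big_mkord.
by apply: eq_bigr => r _; rewrite sqzero_count_rank_poly.
Qed.
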